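(* Let $(\mathsf P,\mathcal O)$ be a semitopology and $p\in\mathsf P$. If $p\in K(p)$ (i.e. $p$ is weakly regular), then $\overline{K(p)}=I(p)$. In particular this holds whenever $p$ is regular.
   Context: A semitopology is a pair $(\mathsf P,\mathcal O)$ where $\mathsf P$ is a set and $\mathcal O\subseteq\mathcal P(\mathsf P)$ contains $\varnothing$ and $\mathsf P$ and is closed under arbitrary unions. Points $p,p'$ are intertwined when every open set containing $p$ intersects every open set containing $p'$; $I(p)$ is the set of points intertwined with $p$; $K(p)=\mathrm{int}(I(p))$, where $\mathrm{int}(R)$ is the union of all open subsets of $R$. The closure $\overline R$ is the set of points $q$ such that every open set containing $q$intersects $R$. A set $T$ is topen when it is nonempty, open, and for all open $O,O'$, $O\cap T\neq\varnothing\neq T\cap O'$ implies $O\cap O'\neq\varnothing$; $p$ is regular when $p\in K(p)$ and $K(p)$ is topen. *)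

Record semitopology (P : Type) : Type := {
  is_open : (P -> Prop) -> Prop;
  open_empty : is_open (fun _ => False);
  open_full : is_open (fun _ => True);
  open_union : forall (F : (P -> Prop) -> Prop),
      (forall O, F O -> is_open O) ->
      is_open (fun x => exists O, F O /\ O x)
}.
Arguments is_open {P} s _.

Section Defs.
Context {P : Type} (S : semitopology P).

Definition intersects (A B : P -> Prop) : Prop := exists x, A x /\ B x.

Definition intertwined (p p' : P) : Prop :=
  forall O O', is_open S O -> is_open S O' -> O p -> O' p' -> intersects O O'.

Definition I (p : P) : P -> Prop := fun q => intertwined p q.

Definition interior (R : P -> Prop) : P -> Prop :=
  fun x => exists O, is_open S O /\ (forall y, O y -> R y) /\ O x.

Definition K (p : P) : P -> Prop := interior (I p).

Definition closure (R : P -> Prop) : P -> Prop :=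
  fun q => forall O, is_open S O -> O q -> intersects O R.

Definition topen (T : P -> Prop) : Prop :=
  (exists x, T x) /\ is_open S T /\
  forall O O', is_open S O -> is_open S O' ->
    intersects O T -> intersects T O' -> intersects O O'.

Definition regular (p : P) : Prop := K p p /\ topen (K p).

Definition weakly_regular (p : P) : Prop := K p p.
End Defs.


(* The two inclusions of
   closure(K(p)) = I(p) come from two general facts about an arbitrary
   semitopology:
   - I(p) is closed: a point q in the closure of I(p) is intertwined with p,
     because any open neighbourhood of q meets I(p) in a point intertwined
     with p.  Since K(p) is contained in I(p) and closure is monotone,
     closure(K(p)) is contained in I(p).
   - every open neighbourhood O of p is dense in I(p): if q is intertwined
     with p, every open neighbourhood of q meets O.  When p is weakly
     regular, p has an open neighbourhood inside I(p); it lies in the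
     interior K(p), so I(p) is contained in closure(O), hence in
     closure(K(p)). *)

Section Semitopology.
Context {P : Type} (S : semitopology P).

Lemma interior_subset (R : P -> Prop) (x : P) :
  interior S R x -> R x.
Proof.
  intros [O [_ [HOR Ox]]]. exact (HOR x Ox).
Qed.

Lemma open_subset_interior (R O : P -> Prop) :
  is_open S O -> (forall x, O x -> R x) -> forall x, O x -> interior S R x.
Proof.
  intros HO HOR x Ox. exists O. auto.
Qed.

Lemma closure_mono (A B : P -> Prop) :
  (forall x, A x -> B x) -> forall q, closure S A q -> closure S B q.
Proof.
  intros HAB q Hq O HO Oq.
  destruct (Hq O HO Oq) as [x [Ox Ax]].
  exists x. auto.
Qed.

Lemma closure_I_subset (p q : P) :
  closure S (I S p) q -> I S p q.
Proof.
  intros Hq O O' HO HO' Op O'q.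
  destruct (Hq O' HO' O'q) as [x [O'x Hx]].
  destruct (Hx O O' HO HO' Op O'x) as [y [Oy O'y]].
  exists y. auto.
Qed.

Lemma I_subset_closure_nbhd (p : P) (O : P -> Prop) :
  is_open S O -> O p -> forall q, I S p q -> closure S O q.
Proof.
  intros HO Op q Hq O' HO' O'q.
  destruct (Hq O O' HO HO' Op O'q) as [y [Oy O'y]].
  exists y. auto.
Qed.

End Semitopology.

Theorem theorem5p17 (P : Type) (S : semitopology P) (p : P) :
  K S p p -> forall q : P, closure S (K S p) q <-> I S p q.
Proof.
  intros [O [HO [HOI Op]]] q. split.
  - intros Hq. apply closure_I_subset.
    exact (closure_mono S (K S p) (I S p) (interior_subset S (I S p)) q Hq).
  - intros Hq.
    apply (closure_mono S O (K S p) (open_subset_interior S (I S p) O HO HOI)).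
    exact (I_subset_closure_nbhd S p O HO Op q Hq).
Qed.
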